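(* Let $U, X, Y, Z$ be uncertain variables on a common set $\Omega$, with finite ranges, forming a Markov chain $U - X - Y - Z$. Then $\mathcal{L}(U\rightarrow Z)\leq \mathcal{L}(U\rightarrow Y)$.
   Context: Let $\Omega$ be a set. An uncertain variable (uv) is a map $X:\Omega\to\mathbb{X}$ into some set; all uvs considered have finite ranges. The range of $X$ is $[\![X]\!]:=\{X(\omega):\omega\in\Omega\}$; the joint range of $X,Y$ is $[\![X,Y]\!]:=\{(X(\omega),Y(\omega)):\omega\in\Omega\}$; the conditional range is $[\![X\mid Y(\omega)=y]\!]:=\{X(\omega):\omega\in\Omega,\ Y(\omega)=y\}$, and similarly $[\![X\mid Z(\omega)=z,Y(\omega)=y]\!]:=\{X(\omega):\omega\in\Omega,\ Z(\omega)=z,\ Y(\omega)=y\}$. Uvs $X$ and $Y$ are unrelated if $[\![X\mid Y(\omega)=y]\!]=[\![X]\!]$ for all $y\in[\![Y]\!]$ and $[\![Y\mid X(\omega)=x]\!]=[\![Y]\!]$ for all $x\in[\![X]\!]$. Uvs $X,Y,Z$ form a Markov chain $X-Y-Z$ if $[\![X\mid Z(\omega)=z,Y(\omega)=y]\!]=[\![X\mid Y(\omega)=y]\!]$ for all $(z,y)\in[\![Z,Y]\!]$; $X_1-X_2-\cdots-X_n$ is a Markov chain if $X_i-X_j-X_\ell$ is a Markov chain for all $1\le i<j<\ell\le n$. The non-stochastic brute-force guessing leakage from a uv $U$ to a uv $Y$ is $$\mathcal{L}(U\rightarrow Y):=\log_2\left(\frac{|[\![U]\!]|}{\min_{y\in[\![Y]\!]}|[\![U\mid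 Y(\omega)=y]\!]|}\right)=\max_{y\in[\![Y]\!]}\log_2\left(\frac{|[\![U]\!]|}{|[\![U\mid Y(\omega)=y]\!]|}\right).$$ *)

From mathcomp Require Import all_boot all_order all_algebra.
From mathcomp Require Import boolp classical_sets reals exp.
Set Implicit Arguments. Unset Strict Implicit. Unset Printing Implicit Defensive.
Import Order.TTheory GRing.Theory Num.Theory.
Local Open Scope ring_scope.

(* Uncertain variables: maps from an arbitrary set Omega into a finite type
   (so all ranges are finite). Ranges are finsets, membership decided
   classically via boolp's asbool. *)

Definition urange (Omega : Type) (T : finType) (X : Omega -> T) : {set T} :=
  [set x | `[< exists w, X w = x >]].

Definition ujrange (Omega : Type) (T S : finType) (X : Omega -> T) (Y : Omega -> S)
  : {set T * S} :=
  [set p | `[< exists w, (X w, Y w) = p >]].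

Definition ucrange (Omega : Type) (T S : finType) (X : Omega -> T) (Y : Omega -> S)
  (y : S) : {set T} :=
  [set x | `[< exists w, Y w = y /\ X w = x >]].

Definition ucrange2 (Omega : Type) (T S V : finType) (X : Omega -> T)
  (Z : Omega -> V) (Y : Omega -> S) (z : V) (y : S) : {set T} :=
  [set x | `[< exists w, Z w = z /\ Y w = y /\ X w = x >]].

Definition markov3 (Omega : Type) (T S V : finType) (X : Omega -> T)
  (Y : Omega -> S) (Z : Omega -> V) : Prop :=
  forall z y, (z, y) \in ujrange Z Y -> ucrange2 X Z Y z y = ucrange X Y y.

(* Markov chain X1 - X2 - X3 - X4: X_i - X_j - X_l for all i < j < l *)
Definition markov4 (Omega : Type) (T1 T2 T3 T4 : finType) (X1 : Omega -> T1)
  (X2 : Omega -> T2) (X3 : Omega -> T3) (X4 : Omega -> T4) : Prop :=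
  [/\ markov3 X1 X2 X3, markov3 X1 X2 X4, markov3 X1 X3 X4 & markov3 X2 X3 X4].

Definition log2 (R : realType) (x : R) : R := ln x / ln 2.

(* Non-stochastic brute-force guessing leakage, in its max form:
   max_{y in [[Y]]} log2 (|[[U]]| / |[[U | Y = y]]|)
   (the empty max, only possible when Omega is empty, is 0). *)
Definition leakage (R : realType) (Omega : Type) (T S : finType)
  (U : Omega -> T) (Y : Omega -> S) : R :=
  \big[Order.max/0]_(y in urange Y)
     log2 (#|urange U|%:R / #|ucrange U Y y|%:R).

From mathcomp Require Import all_boot all_order all_algebra.
From mathcomp Require Import boolp classical_sets reals exp.
Set Implicit Arguments. Unset Strict Implicit.
Import Order.TTheory GRing.Theory Num.Theory.
Local Open Scope ring_scope.

(* The leakage L(U -> Y) is the largest value of log2(|[[U]]| / |[[U | Y = y]]|)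
   over y in [[Y]], so it only grows when the conditional ranges shrink.
   - [leakage_le_of_refines]: if every conditional range [[U | Z = Z w]]
     contains the conditional range [[U | Y = Y w]] at the same w, then
     L(U -> Z) <= L(U -> Y); this rests on the antitonicity of
     t |-> log2(n / t) on positive reals ([log2_ratio_antitone]).
   - [markov_ucrange_sub]: for a Markov chain U - Y - Z and any w in Omega,
     [[U | Y = Y w]] = [[U | Z = Z w, Y = Y w]] is contained in [[U | Z = Z w]].
   The theorem uses the link U - Y - Z of the chain U - X - Y - Z. *)

Lemma urangeP (Omega : Type) (T : finType) (X : Omega -> T) x :
  reflect (exists w, X w = x) (x \in urange X).
Proof. by rewrite inE; apply: (iffP (asboolP _)). Qed.

Lemma ucrangeP (Omega : Type) (T S : finType) (X : Omega -> T) (Y : Omega -> S) y x :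
  reflect (exists w, Y w = y /\ X w = x) (x \in ucrange X Y y).
Proof. by rewrite inE; apply: (iffP (asboolP _)). Qed.

Lemma mem_ucrange (Omega : Type) (T S : finType) (X : Omega -> T) (Y : Omega -> S) w :
  X w \in ucrange X Y (Y w).
Proof. by apply/ucrangeP; exists w. Qed.

(* A Markov chain U - Y - Z: conditioning additionally on Z does not change
   the conditional range of U, so conditioning on Z alone can only enlarge it. *)
Lemma markov_ucrange_sub (Omega : Type) (T S V : finType)
    (U : Omega -> T) (Y : Omega -> S) (Z : Omega -> V) w :
  markov3 U Y Z -> ucrange U Y (Y w) \subset ucrange U Z (Z w).
Proof.
move=> markovUYZ; have Hzy : (Z w, Y w) \in ujrange Z Y by rewrite inE; apply/asboolP; exists w.
apply/fintype.subsetP => u; rewrite -(markovUYZ _ _ Hzy).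
rewrite [u \in ucrange2 _ _ _ _ _]inE => /asboolP [w' [Zw' [_ Uw']]].
by apply/ucrangeP; exists w'.
Qed.

Lemma log2_ratio_antitone (R : realType) (n a b : R) :
  0 < n -> 0 < a -> a <= b -> log2 (n / b) <= log2 (n / a).
Proof.
move=> n_gt0 a_gt0 ab; have b_gt0 := lt_le_trans a_gt0 ab.
rewrite /log2 ler_pM2r; last by rewrite invr_gt0 ln_gt0 // ltr1n.
rewrite ler_ln ?posrE ?divr_gt0 //.
by rewrite ler_pdivlMr // mulrAC ler_pdivrMr // ler_pM2l.
Qed.

Lemma leakage_le_of_refines (R : realType) (Omega : Type) (TU TY TZ : finType)
    (U : Omega -> TU) (Y : Omega -> TY) (Z : Omega -> TZ) :
  (forall w, ucrange U Y (Y w) \subset ucrange U Z (Z w)) ->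
  leakage R U Z <= leakage R U Y.
Proof.
move=> refines; apply: bigmax_le => [|z /urangeP [w <-]]; first exact: bigmax_ge_id.
have Yw_in : Y w \in urange Y by apply/urangeP; exists w.
apply: le_trans (le_bigmax_cond _ _ Yw_in).
have cU : (0 < #|urange U|)%N by apply/card_gt0P; exists (U w); apply/urangeP; exists w.
have cY : (0 < #|ucrange U Y (Y w)|)%N by apply/card_gt0P; exists (U w); exact: mem_ucrange.
by apply: log2_ratio_antitone; rewrite ?ltr0n ?ler_nat // subset_leq_card.
Qed.

Theorem proposition1 (R : realType) (Omega : Type) (TU TX TY TZ : finType)
  (U : Omega -> TU) (X : Omega -> TX) (Y : Omega -> TY) (Z : Omega -> TZ) :
  markov4 U X Y Z ->
  leakage R U Z <= leakage R U Y.
Proof.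
case=> _ _ markovUYZ _.
apply: leakage_le_of_refines => w.
exact: markov_ucrange_sub.
Qed.
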